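(* For a Polish group $G$, every $K_\sigma$ subgroup of $G$ is compactly generated if and only if every countable subgroup of $G$ is compactly generated.
   Context: A subgroup $H$ of a topological group $G$ is compactly generated if $H=\langle K\rangle$ (the subgroup generated by $K$) for some compact $K\subseteq G$; it is $K_\sigma$ if it is a countable union of compact sets. *)

From HB Require Import structures.
From mathcomp Require Import all_boot all_order all_algebra.
From mathcomp Require Import all_classical all_reals all_analysis.
From mathcomp Require Import Rstruct Rstruct_topology.
Set Implicit Arguments. Unset Strict Implicit. Unset Printing Implicit Defensive.
Import Order.TTheory GRing.Theory Num.Theory.
Local Open Scope classical_set_scope.
Local Open Scope ring_scope.

Definition topological_group (G : topologicalType)
  (mul : G -> G -> G) (inv : G -> G) (e : G) : Prop :=
  [/\ (forall x y z, mul x (mul y z) = mul (mul x y) z),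
      (forall x, mul e x = x /\ mul x e = x),
      (forall x, mul (inv x) x = e /\ mul x (inv x) = e),
      continuous (fun p : G * G => mul p.1 p.2) &
      continuous inv].

Definition separable_space (T : topologicalType) : Prop :=
  exists D : set T, countable D /\ closure D = setT.

Definition completely_metrizable (T : topologicalType) : Prop :=
  exists d : T -> T -> Rdefinitions.R,
  [/\ (forall x y, 0 <= d x y /\ (d x y = 0 <-> x = y)),
      (forall x y, d x y = d y x),
      (forall x y z, d x z <= d x y + d y z),
      (forall A : set T, open A <->
          (forall x, A x -> exists2 r : Rdefinitions.R, 0 < r &
                            [set y | d x y < r] `<=` A)) &
      (forall u : nat -> T,
          (forall r : Rdefinitions.R, 0 < r -> exists N : nat,
              forall m n, (N <= m)%N -> (N <= n)%N -> d (u m) (u n) < r) ->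
          exists x : T, u @ \oo --> x)].

Definition polish_space (T : topologicalType) : Prop :=
  separable_space T /\ completely_metrizable T.

Section Subgroups.
Variables (G : topologicalType) (mul : G -> G -> G) (inv : G -> G) (e : G).

Definition is_subgroup (H : set G) : Prop :=
  [/\ H e, (forall x y, H x -> H y -> H (mul x y)) & (forall x, H x -> H (inv x))].

Definition generated_subgroup (A : set G) : set G :=
  [set x | forall H : set G, is_subgroup H -> A `<=` H -> H x].

Definition compactly_generated (H : set G) : Prop :=
  exists K : set G, compact K /\ generated_subgroup K = H.

Definition K_sigma (H : set G) : Prop :=
  exists K : nat -> set G, (forall n, compact (K n)) /\ \bigcup_n K n = H.
End Subgroups.

(* A countable set is the union of its
   singletons, which gives one direction. Conversely, let H be the union of
   compact sets K n. Each K n is covered by finitely many translates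
   y B(e, 1/(n+1)) with y in K n; the countable set C of all these centres
   generates a countable subgroup, which by hypothesis is generated by a compact
   set L. Each x in K n is y (y^-1 x) with y in C and y^-1 x in the set S n of
   quotients of points of K n lying within 1/(n+1) of e; the compact sets S n
   shrink to e, so S = {e} u U S n is compact, and H = <L u S>. *)

From HB Require Import structures.
From mathcomp Require Import all_boot all_order all_algebra.
From mathcomp Require Import all_classical all_reals all_analysis.
From mathcomp Require Import Rstruct Rstruct_topology finmap.
Set Implicit Arguments. Unset Strict Implicit.
Import Order.TTheory GRing.Theory Num.Theory.
Local Open Scope classical_set_scope.
Local Open Scope ring_scope.

Section MetricTopology.
Variables (T : topologicalType) (d : T -> T -> Rdefinitions.R).
Hypothesis d_refl : forall x y, 0 <= d x y /\ (d x y = 0 <-> x = y).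
Hypothesis d_sym : forall x y, d x y = d y x.
Hypothesis d_triangle : forall x y z, d x z <= d x y + d y z.
Hypothesis d_open : forall A : set T, open A <->
  (forall x, A x -> exists2 r : Rdefinitions.R, 0 < r & [set y | d x y < r] `<=` A).

Lemma dxx x : d x x = 0. Proof. exact/(proj2 (d_refl x x)). Qed.

Lemma open_ball x r : open [set y | d x y < r].
Proof.
apply/d_open => y /= dxy; exists (r - d x y); first by rewrite subr_gt0.
by move=> z /=; rewrite ltrBrDl => dyz; exact: le_lt_trans (d_triangle x y z) _.
Qed.

Lemma closed_cball x r : closed [set y | d x y <= r].
Proof.
rewrite -openC; apply/d_open => y /= /negP; rewrite -ltNge => rdxy.
exists (d x y - r); first by rewrite subr_gt0.
move=> z /= dyz dxz; have := d_triangle x z y; rewrite (d_sym z y).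
by apply/negP; rewrite -ltNge -[d x y](subrK r) addrC ltr_leD.
Qed.

Lemma nbhs_ball x U : nbhs x U ->
  exists2 r : Rdefinitions.R, 0 < r & [set y | d x y < r] `<=` U.
Proof.
rewrite nbhsE => -[B [oB Bx] BU].
by have [r r0 rB] := proj1 (d_open B) oB x Bx; exists r => // y /rB /BU.
Qed.

(* A sequence of compact sets shrinking to [x], together with [x], is compact:
   a filter not clustering at [x] lives eventually outside some ball around [x],
   hence on finitely many of the sets. *)
Lemma compact_shrinking (x : T) (S : nat -> set T) :
  (forall n, compact (S n)) -> (forall n y, S n y -> d x y <= n.+1%:R^-1) ->
  compact (x |` \bigcup_n S n).
Proof.
move=> cS dS F PF FS.
have [clx|nclx] := pselect (cluster F x); first by exists x; split => //; left.
have [A [B [FA Bx AB0]]] : exists A B, [/\ F A, nbhs x B & A `&` B = set0].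
  apply: contra_notP nclx => AB A B FA Bx; apply/set0P/eqP => AB0.
  by apply: AB; exists A, B.
have [r r0 rB] := nbhs_ball Bx.
have [N _ /(_ N (leqnn N)) Nr] := near_infty_natSinv_lt (PosNum r0).
have outB y : B y -> ~ A y by move=> By Ay; rewrite -[False]/(set0 y) -AB0.
have FN : F (\big[setU/set0]_(n < N.+1) S n).
  apply: filterS (filterI FA FS) => y [Ay [yx|[n _ Sny]]].
    by exfalso; apply: (outB y) => //; apply: rB; rewrite /= yx dxx.
  have [nN|Nn] := leqP n N; first exact: bigsetU_sup Sny.
  exfalso; apply: (outB y) => //; apply: rB; apply: le_lt_trans (dS _ _ Sny) _.
  by apply: le_lt_trans Nr; rewrite lef_pV2 ?posrE // ler_nat ltnW.
have cSN : compact (\big[setU/set0]_(n < N.+1) S n).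
  by apply: bigsetU_compact => n _; exact: cS.
have [z [Sz Fz]] := cSN F PF FN.
by exists z; split => //; right; exact: bigsetU_bigcup Sz.
Qed.

End MetricTopology.

Lemma countable_image2 (A B C : Type) (f : A -> B -> C) (X : set A) (Y : set B) :
  countable X -> countable Y -> countable [set f x y | x in X & y in Y].
Proof.
move=> cX cY; rewrite image2E.
exact: card_le_trans (card_image_le _ _) (countableX cX cY).
Qed.

Lemma countable_K_sigma (T : topologicalType) (A : set T) : countable A -> K_sigma A.
Proof.
case/countable_injP => g g_inj; exists (fun n => A `&` g @^-1` [set n]); split.
  move=> n; apply: finite_compact.
  have [[x [Ax gx]]|fiber0] := pselect (exists x, (A `&` g @^-1` [set n]) x).
    apply: sub_finite_set (finite_set1 x) => y [Ay gy].
    by apply: g_inj; [exact: mem_set|exact: mem_set|exact: etrans gy (esym gx)].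
  suff -> : A `&` g @^-1` [set n] = set0 by exact: finite_set0.
  by apply/seteqP; split => // y Ay; apply: fiber0; exists y.
by apply/seteqP; split => [y [n _ []] //|y Ay]; exists (g y).
Qed.

(* [compact_cover] is only stated for pointed spaces, so point [T] at [x]. *)
Definition pointed_at (T : topologicalType) (x : T) : Type := T.
HB.instance Definition _ (T : topologicalType) (x : T) :=
  Topological.copy (pointed_at x) T.
HB.instance Definition _ (T : topologicalType) (x : T) :=
  isPointed.Build (pointed_at x) x.

Lemma compact_cover_at (T : topologicalType) (x : T) (A : set T) :
  compact A -> cover_compact A.
Proof.
move=> cA; have : @compact (pointed_at x) A := cA.
by rewrite compact_cover.
Qed.

Section TopologicalGroup.
Variables (G : topologicalType) (mul : G -> G -> G) (inv : G -> G) (e : G).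
Hypothesis G_group : topological_group mul inv e.

Local Notation subgroup := (is_subgroup mul inv e).
Local Notation gen := (generated_subgroup mul inv e).

Lemma mulA x y z : mul x (mul y z) = mul (mul x y) z.
Proof. by case: G_group. Qed.
Lemma mul1g x : mul e x = x. Proof. by case: G_group => _ /(_ x) []. Qed.
Lemma mulg1 x : mul x e = x. Proof. by case: G_group => _ /(_ x) []. Qed.
Lemma mulVg x : mul (inv x) x = e. Proof. by case: G_group => _ _ /(_ x) []. Qed.
Lemma mulgV x : mul x (inv x) = e. Proof. by case: G_group => _ _ /(_ x) []. Qed.
Lemma mulKVg x y : mul x (mul (inv x) y) = y.
Proof. by rewrite mulA mulgV mul1g. Qed.
Lemma invg1 : inv e = e. Proof. by rewrite -[LHS]mulg1 mulVg. Qed.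
Lemma invgK x : inv (inv x) = x.
Proof. by rewrite -[LHS]mulg1 -(mulVg x) mulA mulVg mul1g. Qed.
Lemma invgM x y : inv (mul x y) = mul (inv y) (inv x).
Proof.
have -> : inv (mul x y) = mul (inv (mul x y)) (mul (mul x y) (mul (inv y) (inv x))).
  by rewrite -mulA mulKVg mulgV mulg1.
by rewrite mulA mulVg mul1g.
Qed.

Lemma continuous_mul (T : topologicalType) (f g : T -> G) :
  continuous f -> continuous g -> continuous (fun x => mul (f x) (g x)).
Proof.
move=> cf cg x; have [_ _ _ cmul _] := G_group.
exact: continuous_comp (cvg_pair (cf x) (cg x)) (cmul _).
Qed.

Lemma continuous_divl : continuous (fun p : G * G => mul (inv p.1) p.2).
Proof.
have [_ _ _ _ cinv] := G_group.
apply: (continuous_mul (f := fun p : G * G => inv p.1) (g := snd)) => p.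
  exact: continuous_comp (@cvg_fst _ _ (nbhs p.1) (nbhs p.2) _) (cinv _).
exact: cvg_snd.
Qed.

Lemma open_translate (U : set G) y : open U -> open [set x | U (mul y x)].
Proof.
move=> oU; apply: open_comp oU => x _.
have ccst : continuous (fun _ : G => y) by move=> ?; exact: cvg_cst.
have cid : continuous (@id G) by move=> ?; exact: cvg_id.
exact: continuous_mul ccst cid x.
Qed.

Lemma compact_quotients (K : set G) :
  compact K -> compact [set mul (inv a) b | a in K & b in K].
Proof.
move=> cK; rewrite image2E (_ : uncurry _ = fun p => mul (inv p.1) p.2).
  exact: continuous_compact (continuous_subspaceT continuous_divl) (compact_setX cK cK).
by apply/funext => -[].
Qed.

(* [[set x | U (mul (inv y) x)]] is the left translate [y U]. *)
Lemma compact_translates_cover (K U : set G) : compact K -> open U -> U e ->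
  exists F : {fset G}, [set` F] `<=` K /\
    K `<=` \bigcup_(y in [set` F]) [set x | U (mul (inv y) x)].
Proof.
move=> cK oU Ue.
have [] := compact_cover_at e cK (D := K) (f := fun y => [set x | U (mul (inv y) x)]).
- by move=> y _; exact: open_translate.
- by move=> y Ky; exists y => //=; rewrite mulVg.
- by move=> F FK KF; exists F; split => // y Fy; exact/set_mem/FK.
Qed.

Lemma subgroup_gen A : subgroup (gen A).
Proof.
split=> [H [] //|x y Ax Ay H sH AH|x Ax H sH AH]; have [_ Hmul Hinv] := sH.
  by apply: Hmul; [exact: Ax|exact: Ay].
by apply: Hinv; exact: Ax.
Qed.

Lemma sub_gen A : A `<=` gen A.
Proof. by move=> x Ax H _; apply. Qed.

Lemma gen_sub A H : subgroup H -> A `<=` H -> gen A `<=` H.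
Proof. by move=> sH AH x; apply. Qed.

Lemma gen_sub_gen A B : A `<=` gen B -> gen A `<=` gen B.
Proof. exact: gen_sub (subgroup_gen B). Qed.

Lemma gen_setUl A B S : gen A = gen B -> gen (A `|` S) = gen (B `|` S).
Proof.
have genU A' B' : gen A' = gen B' -> gen (A' `|` S) `<=` gen (B' `|` S).
  move=> AB; apply: gen_sub_gen => x [A'x|Sx]; last by apply: sub_gen; right.
  have : gen B' x by rewrite -AB; exact: sub_gen.
  by apply: gen_sub_gen => y B'y; apply: sub_gen; left.
by move=> AB; apply/seteqP; split; apply: genU.
Qed.

Definition letters A := [set if b then a else inv a | a in A & b in [set: bool]].

Fixpoint words A m := if m is m'.+1
  then [set mul a w | a in letters A & w in words A m'] else [set e].

Lemma countable_words A m : countable A -> countable (words A m).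
Proof.
move=> cA; elim: m => [|m IHm] /=; first exact: countable1.
apply: countable_image2 _ IHm; exact: countable_image2 cA (countableP _).
Qed.

Lemma letters_inv A x : letters A x -> letters A (inv x).
Proof.
case=> a Aa [[] _ <-]; exists a => //; first by exists false.
by exists true; rewrite //= invgK.
Qed.

Lemma words_mul A m x y :
  words A m x -> (\bigcup_k words A k) y -> (\bigcup_k words A k) (mul x y).
Proof.
elim: m x => [|m IHm] x /=; first by move=> ->; rewrite mul1g.
case=> a Aa [w Aw <-] /(IHm _ Aw) [k _ Ak].
by exists k.+1 => //=; exists a => //; exists (mul w y); rewrite ?mulA.
Qed.

Lemma words_inv A m x : words A m x -> (\bigcup_k words A k) (inv x).
Proof.
elim: m x => [|m IHm] x /=; first by move=> ->; rewrite invg1; exists 0%N.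
case=> a Aa [w Aw <-]; rewrite invgM; have [k _ Ak] := IHm _ Aw.
apply: words_mul Ak _; exists 1%N => //=; exists (inv a); first exact: letters_inv.
by exists e; rewrite ?mulg1.
Qed.

Lemma gen_sub_words A : gen A `<=` \bigcup_m words A m.
Proof.
apply: gen_sub => [|a Aa]; last first.
  by exists 1%N => //=; exists a; [exists a => //; exists true|exists e; rewrite ?mulg1].
split; first by exists 0%N.
  by move=> x y [m _ Ax]; exact: words_mul Ax.
by move=> x [m _ Ax]; exact: words_inv Ax.
Qed.

Lemma countable_gen A : countable A -> countable (gen A).
Proof.
move=> cA; apply: sub_countable (subset_card_le (@gen_sub_words A)) _.
by apply: bigcup_countable => // m _; exact: countable_words.
Qed.

Section KsigmaSubgroups.
Variable d : G -> G -> Rdefinitions.R.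
Hypothesis d_refl : forall x y, 0 <= d x y /\ (d x y = 0 <-> x = y).
Hypothesis d_sym : forall x y, d x y = d y x.
Hypothesis d_triangle : forall x y z, d x z <= d x y + d y z.
Hypothesis d_open : forall A : set G, open A <->
  (forall x, A x -> exists2 r : Rdefinitions.R, 0 < r & [set y | d x y < r] `<=` A).

Lemma K_sigma_gen_countable_compact H : subgroup H -> K_sigma H ->
  exists C S, [/\ countable C, compact S & gen (C `|` S) = H].
Proof.
move=> sH [K [cK UK]]; have KH n : K n `<=` H by move=> x Kx; rewrite -UK; exists n.
pose eps n : Rdefinitions.R := n.+1%:R^-1.
have /choice [F FK] : forall n, exists Fn : {fset G}, [set` Fn] `<=` K n /\
    K n `<=` \bigcup_(y in [set` Fn]) [set x | d e (mul (inv y) x) < eps n].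
  move=> n; apply: compact_translates_cover (cK n) (open_ball _ _ _ _) _.
  - exact: d_triangle.
  - exact: d_open.
  - by rewrite /= dxx // invr_gt0 ltr0n.
pose S n := [set mul (inv a) b | a in K n & b in K n] `&` [set y | d e y <= eps n].
pose C := \bigcup_n [set` F n]; pose S' := e |` \bigcup_n S n.
exists C, S'; split.
- by apply: bigcup_countable => // n _; exact: countable_fset.
- apply: (compact_shrinking d_refl d_open) => [n|n y [] //].
  by apply: compact_closedI; [exact: compact_quotients | exact: closed_cball].
have [He Hmul Hinv] := sH; apply/seteqP; split.
  apply: gen_sub => // x [[n _ /(proj1 (FK n)) /KH //]|[-> //|]].
  case=> n _ [[a Ka [b Kb <-]] _].
  by apply: Hmul; [apply: Hinv; exact: KH Ka|exact: KH Kb].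
move=> x; rewrite -UK => -[n _ Kx]; have [y Fy /= yx] := proj2 (FK n) x Kx.
have [_ gen_mul _] := subgroup_gen (C `|` S').
rewrite -(mulKVg y x).
apply: gen_mul; apply: sub_gen; first by left; exists n.
right; right; exists n => //; split; last exact: ltW.
exists y; first exact: (proj1 (FK n)).
by exists x.
Qed.

End KsigmaSubgroups.

End TopologicalGroup.

Theorem mainTheorem8 (G : topologicalType) (mul : G -> G -> G) (inv : G -> G) (e : G) :
  topological_group mul inv e -> polish_space G ->
  ((forall H : set G, is_subgroup mul inv e H -> K_sigma H ->
      compactly_generated mul inv e H) <->
   (forall H : set G, is_subgroup mul inv e H -> countable H ->
      compactly_generated mul inv e H)).
Proof.
move=> G_group [_ [d [d_refl d_sym d_triangle d_open _]]].
split=> [K_sigma_cg H sH /countable_K_sigma|countable_cg H sH KH]; first exact: K_sigma_cg.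
have [C [S [cC cS <-]]] :=
  K_sigma_gen_countable_compact G_group d_refl d_sym d_triangle d_open sH KH.
have [L [cL genL]] := countable_cg _ (subgroup_gen _ _ _ C) (countable_gen G_group cC).
by exists (L `|` S); split; [exact: compactU | exact: gen_setUl].
Qed.
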